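(* For any $\mathbf{x}_i\in\chi$ and any $\mathbf{x}\in\mathcal{D}_{i,\mathrm{DP}}$: (i) $\mathcal{D}_{i,\mathrm{DP}}\subseteq\mathcal{D}_{i,\mathrm{ML}}$; (ii) $\|\mathbf{x}-\mathbf{y}\|\ge\|\mathbf{x}_i-\mathbf{x}_j\|$ for every $\mathbf{x}_j\in\chi$ and every $\mathbf{y}\in\mathcal{D}_{j,\mathrm{DP}}$; (iii) $\|\mathbf{x}-\mathbf{x}_j\|\ge\|\mathbf{x}_i-\mathbf{x}_j\|$ for every $\mathbf{x}_j\in\chi$, with equality (for $\mathbf{x}_j\neq\mathbf{x}_i$) only when $\mathbf{x}=\mathbf{x}_i$.
   Context: A constellation is a finite set $\chi=\{\mathbf{x}_1,\dots,\mathbf{x}_M\}\subset\mathbb{R}^2$ of distinct points, $M\ge 3$, not all lying on one line. The Voronoi region of $\mathbf{x}_i$ is $\mathcal{D}_{i,\mathrm{ML}}=\{\mathbf{x}\in\mathbb{R}^2:\|\mathbf{x}-\mathbf{x}_i\|\le\|\mathbf{x}-\mathbf{x}_j\|\ \forall j\}$. Two distinct points $\mathbf{x}_i,\mathbf{x}_j$ are neighbors if their Voronoi regions share an edge (a common boundary segment or ray of positive length); $\mathcal{S}_i$ denotes the set of neighbors of $\mathbf{x}_i$. The distance preserving constructive interference region (DPCIR) of $\mathbf{x}_i$ is $\mathcal{D}_{i,\mathrm{DP}}=\{\mathbf{x}\in\mathbb{R}^2:(\mathbf{x}_i-\mathbf{x}_j)^T\mathbf{x}\ge(\mathbf{x}_i-\mathbf{x}_j)^T(\mathbf{x}_i+\mathbf{x}_j)/2+\|\mathbf{x}_i-\mathbf{x}_j\|^2/2\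 \forall\mathbf{x}_j\in\mathcal{S}_i\}$, equivalently $\{\mathbf{x}:(\mathbf{x}_i-\mathbf{x}_j)^T(\mathbf{x}-\mathbf{x}_i)\ge 0\ \forall\mathbf{x}_j\in\mathcal{S}_i\}$. *)

From Stdlib Require Import Reals List.
Open Scope R_scope.

Definition pt := (R * R)%type.

Definition padd (p q : pt) : pt := (fst p + fst q, snd p + snd q).
Definition psub (p q : pt) : pt := (fst p - fst q, snd p - snd q).
Definition pscale (t : R) (p : pt) : pt := (t * fst p, t * snd p).
Definition dot (p q : pt) : R := fst p * fst q + snd p * snd q.
Definition norm (p : pt) : R := sqrt (dot p p).
Definition pdist (p q : pt) : R := norm (psub p q).

Definition collinear (chi : list pt) : Prop :=
  exists a b c : R, (a <> 0 \/ b <> 0) /\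
    forall p, In p chi -> a * fst p + b * snd p = c.

Definition constellation (chi : list pt) : Prop :=
  NoDup chi /\ (3 <= length chi)%nat /\ ~ collinear chi.

Definition voronoi (chi : list pt) (xi x : pt) : Prop :=
  forall xj, In xj chi -> pdist x xi <= pdist x xj.

Definition on_segment (a b z : pt) : Prop :=
  exists t, 0 <= t <= 1 /\ z = padd a (pscale t (psub b a)).

Definition neighbor (chi : list pt) (xi xj : pt) : Prop :=
  In xi chi /\ In xj chi /\ xi <> xj /\
  exists a b : pt, a <> b /\
    forall z, on_segment a b z -> voronoi chi xi z /\ voronoi chi xj z.

Definition dpcir (chi : list pt) (xi x : pt) : Prop :=
  forall xj, neighbor chi xi xj ->
    dot (psub xi xj) x >=
      dot (psub xi xj) (padd xi xj) / 2 + (norm (psub xi xj))^2 / 2.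

From Stdlib Require Import Reals List Lra Psatz Classical.
Open Scope R_scope.

(* The Voronoi cell of [xi] is already cut out by the bisector half-planes of
   its neighbours: if [xi + w] violated the half-plane of some [m], perturb [w]
   into general position and walk along the ray from [xi] towards it; the first
   bisector crossed belongs to a single point [k0], and a short segment of that
   bisector around the crossing lies on the common boundary of the two cells,
   so [k0] is a neighbour whose half-plane [w] violates as well.  Applied to
   [xi + T (x - xi)] for all [T >= 0] this gives [(x - xi).(xi - xj) >= 0] for
   every [xj], and (i)-(iii) follow by expanding squared distances and
   Cauchy-Schwarz. *)

Lemma pt_eq (p q : pt) : fst p = fst q -> snd p = snd q -> p = q.
Proof. destruct p, q; simpl; intros -> ->; reflexivity. Qed.

Lemma dot_self_nonneg p : 0 <= dot p p.
Proof. unfold dot; nra. Qed.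

Lemma dot_self_eq0 p : dot p p = 0 -> p = (0, 0).
Proof. unfold dot; intro H; apply pt_eq; simpl; nra. Qed.

Lemma dot_pscale_l a p q : dot (pscale a p) q = a * dot p q.
Proof. unfold dot, pscale; simpl; ring. Qed.

Lemma dot_ge_sqnorm_sqnorm_ge p q : dot p q >= dot q q -> dot p p >= dot q q.
Proof.
  intro H.
  assert (CS : dot p p * dot q q - dot p q * dot p q
               = (fst p * snd q - snd p * fst q) ^ 2) by (unfold dot; ring).
  pose proof (dot_self_nonneg q).
  destruct (Req_dec (dot q q) 0) as [E|E]; [pose proof (dot_self_nonneg p); lra|].
  assert (dot q q * dot q q <= dot p p * dot q q)
    by (pose proof (pow2_ge_0 (fst p * snd q - snd p * fst q)); nra).
  apply Rle_ge, (Rmult_le_reg_r (dot q q)); lra.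
Qed.

Definition sqdist (p q : pt) : R := dot (psub p q) (psub p q).

Lemma sqdist_nonneg p q : 0 <= sqdist p q.
Proof. apply dot_self_nonneg. Qed.

Lemma sqdist_eq0 p q : sqdist p q = 0 -> p = q.
Proof.
  intro E. apply dot_self_eq0 in E. injection E; intros.
  apply pt_eq; lra.
Qed.

Lemma sqdist_pos xi k : k <> xi -> 0 < sqdist xi k.
Proof.
  intro Hk. pose proof (sqdist_nonneg xi k).
  destruct (Req_dec (sqdist xi k) 0) as [E|E]; [|lra].
  apply sqdist_eq0 in E. congruence.
Qed.

Lemma sqdist_expand z xi l :
  sqdist z l = sqdist z xi + 2 * dot (psub z xi) (psub xi l) + sqdist xi l.
Proof. unfold sqdist, dot, psub; simpl; ring. Qed.

Lemma pdist_le_of_sqdist a b c d : sqdist a b <= sqdist c d -> pdist a b <= pdist c d.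
Proof. intro H; apply sqrt_le_1_alt, H. Qed.

Lemma sqdist_eq_of_pdist a b c d : pdist a b = pdist c d -> sqdist a b = sqdist c d.
Proof. intro H; apply sqrt_inj; [apply dot_self_nonneg|apply dot_self_nonneg|exact H]. Qed.

Definition near0 (Q : R -> Prop) : Prop :=
  exists d, 0 < d /\ forall s, 0 < s < d -> Q s.

Lemma near0_and (P Q : R -> Prop) :
  near0 P -> near0 Q -> near0 (fun s => P s /\ Q s).
Proof.
  intros [d1 [H1 HP]] [d2 [H2 HQ]]. exists (Rmin d1 d2).
  split; [now apply Rmin_glb_lt|].
  intros s Hs. pose proof (Rmin_l d1 d2). pose proof (Rmin_r d1 d2).
  split; [apply HP|apply HQ]; lra.
Qed.

Lemma near0_forall_in {T} (l : list T) (P : T -> Prop) (Q : T -> R -> Prop) :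
  (forall j, In j l -> P j -> near0 (Q j)) ->
  near0 (fun s => forall j, In j l -> P j -> Q j s).
Proof.
  induction l as [|x l IH]; intro H.
  - exists 1. split; [lra|]. intros s _ j [].
  - assert (Hl : near0 (fun s => forall j, In j l -> P j -> Q j s))
      by (apply IH; intros j Hj; apply H; right; exact Hj).
    destruct (classic (P x)) as [Px|Px].
    + destruct (near0_and _ _ (H x (or_introl eq_refl) Px) Hl) as [d [Hd Hs]].
      exists d. split; [exact Hd|]. intros s Hsd.
      destruct (Hs s Hsd) as [Hx Hrest]. intros j [<-|Hj] Pj; auto.
    + destruct Hl as [d [Hd Hs]]. exists d. split; [exact Hd|].
      intros s Hsd j [<-|Hj] Pj; [contradiction|]. apply Hs; auto.
Qed.

Lemma near0_affine_pos a b : 0 < a -> near0 (fun s => 0 < a + s * b).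
Proof.
  intro Ha. exists (a / (Rabs b + 1)). pose proof (Rabs_pos b).
  split; [apply Rdiv_lt_0_compat; lra|]. intros s [Hs0 Hs].
  assert (s * (Rabs b + 1) < a)
    by (apply Rmult_lt_compat_r with (r := Rabs b + 1) in Hs; [|lra];
        unfold Rdiv in Hs; rewrite Rmult_assoc, Rinv_l in Hs; lra).
  pose proof (Rle_abs (- b)). rewrite Rabs_Ropp in *. nra.
Qed.

Lemma near0_affine_neg a b : a < 0 -> near0 (fun s => a + s * b < 0).
Proof.
  intro Ha. destruct (near0_affine_pos (- a) (- b)) as [d [Hd H]]; [lra|].
  exists d. split; [exact Hd|]. intros s Hs. specialize (H s Hs). lra.
Qed.

Lemma near0_affine_neq0 a b : a <> 0 \/ b <> 0 -> near0 (fun s => a + s * b <> 0).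
Proof.
  intro Hab. destruct (Req_dec a 0) as [->|Ha].
  - exists 1. split; [lra|]. intros s Hs E.
    destruct Hab as [|Hb]; [contradiction|]. apply Hb. nra.
  - destruct (Rlt_dec a 0) as [Hn|Hp].
    + destruct (near0_affine_neg a b Hn) as [d [Hd H]].
      exists d. split; [exact Hd|]. intros s Hs. specialize (H s Hs). lra.
    + destruct (near0_affine_pos a b) as [d [Hd H]]; [lra|].
      exists d. split; [exact Hd|]. intros s Hs. specialize (H s Hs). lra.
Qed.

Lemma near0_pick (Q : R -> Prop) : near0 Q -> exists s, 0 < s < 1 /\ Q s.
Proof.
  intros [d [Hd H]]. exists (Rmin d 1 / 2).
  pose proof (Rmin_l d 1). pose proof (Rmin_r d 1).
  assert (0 < Rmin d 1) by (apply Rmin_glb_lt; lra).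
  split; [lra|]. apply H. lra.
Qed.

Lemma exists_argmin_in {T} (l : list T) (P : T -> Prop) (f : T -> R) x0 :
  In x0 l -> P x0 -> exists k, In k l /\ P k /\ forall j, In j l -> P j -> f k <= f j.
Proof.
  revert x0; induction l as [|a l IH]; intros x0 Hx0 Px0; [destruct Hx0|].
  destruct (classic (exists y, In y l /\ P y)) as [[y [Hy Py]]|Hnone].
  - destruct (IH y Hy Py) as [k [Hk [Pk Hmin]]].
    destruct (classic (P a /\ f a < f k)) as [[Pa Hlt]|Hge].
    + exists a. split; [left; reflexivity|]. split; [exact Pa|].
      intros j [<-|Hj] Pj; [lra|]. specialize (Hmin j Hj Pj). lra.
    + exists k. split; [right; exact Hk|]. split; [exact Pk|].
      intros j [<-|Hj] Pj; [|auto]. apply Rnot_lt_le. tauto.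
  - destruct Hx0 as [<-|Hx0]; [|exfalso; eauto].
    exists a. split; [left; reflexivity|]. split; [exact Px0|].
    intros j [<-|Hj] Pj; [lra|]. exfalso; eauto.
Qed.

Definition excess (xi k w : pt) : R := sqdist xi k + 2 * dot w (psub xi k).

Lemma excess_self xi w : excess xi xi w = 0.
Proof. unfold excess, sqdist, dot, psub; simpl; ring. Qed.

Lemma sqdist_shift xi k w : sqdist (padd xi w) k = dot w w + excess xi k w.
Proof. unfold excess, sqdist, dot, padd, psub; simpl; ring. Qed.

Lemma excess_line xi k w u s :
  excess xi k (padd w (pscale s u)) = excess xi k w + s * (2 * dot u (psub xi k)).
Proof. unfold excess, dot, padd, pscale; simpl; ring. Qed.

Lemma excess_pscale xi k v t :
  excess xi k (pscale t v) = sqdist xi k + t * (2 * dot v (psub xi k)).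
Proof. unfold excess, dot, pscale; simpl; ring. Qed.

Lemma excess_convex xi k w u s :
  excess xi k (padd w (pscale s (psub u w))) = (1 - s) * excess xi k w + s * excess xi k u.
Proof. unfold excess, dot, padd, pscale, psub; simpl; ring. Qed.

Lemma voronoi_of_excess_nonneg chi xi w :
  (forall l, In l chi -> 0 <= excess xi l w) -> voronoi chi xi (padd xi w).
Proof.
  intros H l Hl. apply pdist_le_of_sqdist.
  rewrite !sqdist_shift, excess_self. specialize (H l Hl). lra.
Qed.

Lemma excess_pos_near {P : pt -> Prop} chi xi w e :
  (forall l, In l chi -> P l -> 0 < excess xi l w) ->
  exists s0, 0 < s0 /\ forall l, In l chi -> P l ->
    forall sg, - s0 <= sg <= s0 -> 0 < excess xi l (padd w (pscale sg e)).
Proof.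
  intro Hpos.
  destruct (near0_forall_in chi P
      (fun l s => 0 < excess xi l w + s * (2 * dot e (psub xi l)) /\
                  0 < excess xi l w + s * (- (2 * dot e (psub xi l)))))
    as [d [Hd Hnear]].
  { intros l Hl Pl. apply near0_and; apply near0_affine_pos; auto. }
  exists (d / 2). split; [lra|]. intros l Hl Pl sg Hsg. rewrite excess_line.
  destruct (Rtotal_order sg 0) as [Hn|[->|Hp]].
  - replace (sg * (2 * dot e (psub xi l))) with (- sg * - (2 * dot e (psub xi l))) by ring.
    apply (Hnear (- sg)); auto. lra.
  - specialize (Hpos l Hl Pl). lra.
  - apply (Hnear sg); auto. lra.
Qed.

Lemma on_segment_around xi w e s z :
  0 <= s -> on_segment (padd xi (padd w (pscale (- s) e))) (padd xi (padd w (pscale s e))) z ->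
  exists sg, - s <= sg <= s /\ z = padd xi (padd w (pscale sg e)).
Proof.
  intros Hs [tau [Htau ->]]. exists ((2 * tau - 1) * s). split; [split; nra|].
  apply pt_eq; unfold padd, pscale, psub; simpl; ring.
Qed.

(* The tie is spread into a segment of the bisector of [xi] and [k0] by moving
   orthogonally to [xi - k0]. *)
Lemma neighbor_of_strict_tie chi xi k0 w :
  In xi chi -> In k0 chi -> k0 <> xi -> excess xi k0 w = 0 ->
  (forall l, In l chi -> l <> xi -> l <> k0 -> 0 < excess xi l w) ->
  neighbor chi xi k0.
Proof.
  intros Hi Hk0 Hk0i Htie Hpos.
  set (e := (- snd (psub xi k0), fst (psub xi k0)) : pt).
  assert (He0 : dot e (psub xi k0) = 0) by (unfold e, dot; simpl; ring).
  destruct (excess_pos_near (P := fun l => l <> xi /\ l <> k0) chi xi w e)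
    as [s0 [Hs0 Hperturb]].
  { intros l Hl [Hli Hlk]. auto. }
  split; [exact Hi|split; [exact Hk0|split; [auto|]]].
  exists (padd xi (padd w (pscale (- s0) e))), (padd xi (padd w (pscale s0 e))).
  split.
  { intro Heq. assert (F1 := f_equal fst Heq). assert (F2 := f_equal snd Heq).
    simpl in F1, F2. apply Hk0i, pt_eq; nra. }
  intros z Hz. destruct (on_segment_around xi w e s0 z) as [sg [Hsg ->]]; [lra|exact Hz|].
  assert (Hvi : voronoi chi xi (padd xi (padd w (pscale sg e)))).
  { apply voronoi_of_excess_nonneg. intros l Hl.
    destruct (classic (l = xi)) as [->|Hli]; [rewrite excess_self; lra|].
    destruct (classic (l = k0)) as [->|Hlk].
    - rewrite excess_line, Htie, He0. lra.
    - apply Rlt_le, Hperturb; auto. }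
  split; [exact Hvi|].
  intros l Hl. rewrite <- (Hvi l Hl). apply pdist_le_of_sqdist.
  rewrite !sqdist_shift, excess_self, excess_line, Htie, He0. lra.
Qed.

(* [dot v (tie_normal xi k l) = 0] iff the ray [t v] from [xi] meets the
   bisectors of [xi, k] and of [xi, l] at the same parameter [t]. *)
Definition tie_normal (xi k l : pt) : pt :=
  psub (pscale (sqdist xi k) (psub xi l)) (pscale (sqdist xi l) (psub xi k)).

Lemma dot_tie_normal v xi k l :
  dot v (tie_normal xi k l)
  = sqdist xi k * dot v (psub xi l) - sqdist xi l * dot v (psub xi k).
Proof. unfold tie_normal, dot, psub, pscale; simpl; ring. Qed.

Lemma tie_normal_neq0 xi k l :
  k <> xi -> l <> xi -> k <> l -> tie_normal xi k l <> (0, 0).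
Proof.
  intros Hk Hl Hkl E.
  pose proof (sqdist_pos xi k Hk) as Pk. pose proof (sqdist_pos xi l Hl) as Pl.
  assert (E1 := f_equal fst E). assert (E2 := f_equal snd E).
  revert Pk Pl E1 E2. unfold tie_normal, sqdist, dot, psub, pscale; simpl.
  set (p1 := fst xi - fst k). set (p2 := snd xi - snd k).
  set (q1 := fst xi - fst l). set (q2 := snd xi - snd l).
  set (Ak := p1 * p1 + p2 * p2). set (Al := q1 * q1 + q2 * q2).
  intros Pk Pl E1 E2.
  assert (Hsq : Ak * Ak * Al = Al * Al * Ak).
  { unfold Al at 1. unfold Ak at 3.
    replace (Ak * Ak * (q1 * q1 + q2 * q2))
      with ((Ak * q1) * (Ak * q1) + (Ak * q2) * (Ak * q2)) by ring.
    replace (Ak * q1) with (Al * p1) by lra. replace (Ak * q2) with (Al * p2) by lra.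
    ring. }
  assert (HA : Ak = Al) by (apply Rmult_eq_reg_r with (Ak * Al); nra).
  rewrite <- HA in E1, E2.
  assert (q1 = p1) by (apply Rmult_eq_reg_l with Ak; lra).
  assert (q2 = p2) by (apply Rmult_eq_reg_l with Ak; lra).
  apply Hkl, pt_eq; unfold p1, p2, q1, q2 in *; lra.
Qed.

Section NeighborHalfplanes.

Variables (chi : list pt) (xi : pt).
Hypothesis xi_in : In xi chi.

Definition generic (v : pt) : Prop :=
  forall k l, In k chi -> In l chi -> k <> xi -> l <> xi -> k <> l ->
    dot v (tie_normal xi k l) <> 0.

Lemma near0_generic w u :
  (forall k l, In k chi -> In l chi -> k <> xi -> l <> xi -> k <> l ->
     dot w (tie_normal xi k l) <> 0 \/ dot u (tie_normal xi k l) <> 0) ->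
  near0 (fun s => generic (padd w (pscale s u))).
Proof.
  intro H.
  destruct (near0_forall_in (list_prod chi chi)
      (fun kl => fst kl <> xi /\ snd kl <> xi /\ fst kl <> snd kl)
      (fun kl s => dot w (tie_normal xi (fst kl) (snd kl))
                   + s * dot u (tie_normal xi (fst kl) (snd kl)) <> 0))
    as [d [Hd Hnear]].
  { intros [k l] Hkl [Hk [Hl Hne]]. apply in_prod_iff in Hkl.
    apply near0_affine_neq0, H; tauto. }
  exists d. split; [exact Hd|]. intros s Hs k l Hk Hl Hki Hli Hkl.
  replace (dot (padd w (pscale s u)) (tie_normal xi k l))
    with (dot w (tie_normal xi k l) + s * dot u (tie_normal xi k l))
    by (unfold dot, padd, pscale; simpl; ring).
  apply (Hnear s Hs (k, l)); [apply in_prod|]; auto.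
Qed.

Lemma exists_generic_inside :
  exists u, generic u /\ forall k, In k chi -> k <> xi -> 0 < excess xi k u.
Proof.
  assert (Hnear : near0 (fun s => generic (padd (1, 0) (pscale s (0, 1))))).
  { apply near0_generic. intros k l Hk Hl Hki Hli Hkl.
    pose proof (tie_normal_neq0 xi k l Hki Hli Hkl) as Hn.
    destruct (tie_normal xi k l) as [c1 c2].
    unfold dot; simpl. apply NNPP. intro F. apply Hn, pt_eq; simpl; lra. }
  destruct (near0_pick _ Hnear) as [s [_ Hu]].
  set (u := padd (1, 0) (pscale s (0, 1))) in Hu.
  destruct (near0_pick _ (near0_forall_in chi (fun k => k <> xi)
      (fun k e => 0 < sqdist xi k + e * (2 * dot u (psub xi k)))
      (fun k _ Hk => near0_affine_pos _ _ (sqdist_pos xi k Hk))))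
    as [e [He Hinside]].
  exists (pscale e u). split.
  - intros k l Hk Hl Hki Hli Hkl. rewrite dot_pscale_l.
    apply Rmult_integral_contrapositive. split; [lra|]. apply Hu; auto.
  - intros k Hk Hki. rewrite excess_pscale. auto.
Qed.

(* The ray [t v] crosses the bisector of [xi] and [k] at [t = hit k]. *)
Lemma ray_first_bisector v m :
  generic v -> In m chi -> excess xi m v < 0 ->
  exists k0 t, In k0 chi /\ k0 <> xi /\ 0 < t < 1 /\
    excess xi k0 (pscale t v) = 0 /\
    forall l, In l chi -> l <> xi -> l <> k0 -> 0 < excess xi l (pscale t v).
Proof.
  intros Hgen Hm Hmv.
  set (c k := dot v (psub xi k)).
  set (hit k := sqdist xi k / (-2 * c k)).
  assert (Hcm : c m < 0)
    by (pose proof (dot_self_nonneg (psub xi m)); unfold c, excess, sqdist in *; lra).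
  destruct (exists_argmin_in chi (fun k => c k < 0) hit m Hm Hcm)
    as [k0 [Hk0 [Hck0 Hmin]]].
  assert (Hk0i : k0 <> xi).
  { intro E. subst k0. unfold c, dot, psub in Hck0; simpl in Hck0. lra. }
  assert (Hhit : forall k, c k < 0 -> sqdist xi k = hit k * (-2 * c k))
    by (intros k Hk; unfold hit; field; lra).
  assert (Hray : forall k t, excess xi k (pscale t v) = sqdist xi k + t * (2 * c k))
    by (intros; apply excess_pscale).
  assert (Ht0 : 0 < hit k0)
    by (unfold hit; apply Rdiv_lt_0_compat; [apply sqdist_pos, Hk0i|lra]).
  exists k0, (hit k0). split; [exact Hk0|split; [exact Hk0i|split; [split; [exact Ht0|]|split]]].
  - apply Rle_lt_trans with (hit m); [apply Hmin; auto|].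
    unfold excess in Hmv. fold (c m) in Hmv. rewrite Hhit in Hmv by exact Hcm. nra.
  - rewrite Hray, Hhit by exact Hck0. ring.
  - intros l Hl Hli Hlk0. rewrite Hray.
    destruct (Rlt_le_dec (c l) 0) as [Hcl|Hcl].
    + assert (Hne : hit l <> hit k0).
      { intro E. apply (Hgen k0 l Hk0 Hl Hk0i Hli (not_eq_sym Hlk0)).
        rewrite dot_tie_normal. fold (c l) (c k0).
        rewrite (Hhit k0 Hck0), (Hhit l Hcl), E. ring. }
      specialize (Hmin l Hl Hcl). rewrite (Hhit l Hcl).
      assert (0 < (-2 * c l) * (hit l - hit k0)) by (apply Rmult_lt_0_compat; lra).
      lra.
    + pose proof (sqdist_pos xi l Hli).
      assert (0 <= hit k0 * c l) by (apply Rmult_le_pos; lra).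
      lra.
Qed.

Lemma excess_nonneg_of_neighbors w :
  (forall k, neighbor chi xi k -> 0 <= excess xi k w) ->
  forall m, In m chi -> 0 <= excess xi m w.
Proof.
  intros Hnb m Hm. apply Rnot_lt_le. intro Hmw.
  destruct exists_generic_inside as [u [Hu Hinside]].
  assert (Hnear : near0 (fun s => generic (padd w (pscale s (psub u w))) /\
                                  excess xi m (padd w (pscale s (psub u w))) < 0)).
  { apply near0_and.
    - apply near0_generic. intros k l Hk Hl Hki Hli Hkl.
      destruct (Req_dec (dot w (tie_normal xi k l)) 0) as [E|E]; [right|left; exact E].
      replace (dot (psub u w) (tie_normal xi k l))
        with (dot u (tie_normal xi k l) - dot w (tie_normal xi k l))
        by (unfold dot, psub; simpl; ring).
      rewrite E, Rminus_0_r. apply Hu; auto.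
    - destruct (near0_affine_neg _ (2 * dot (psub u w) (psub xi m)) Hmw) as [d [Hd H]].
      exists d. split; [exact Hd|]. intros s Hs. rewrite excess_line. auto. }
  (* [v] lies between [w] and the generic inner point [u]: it satisfies the
     neighbour half-planes and, for small [s], is generic and still violates
     the half-plane of [m]. *)
  destruct (near0_pick _ Hnear) as [s [Hs [Hgen Hmv]]].
  set (v := padd w (pscale s (psub u w))) in *.
  destruct (ray_first_bisector v m Hgen Hm Hmv) as [k0 [t [Hk0 [Hk0i [Ht [Htie Hpos]]]]]].
  pose proof (neighbor_of_strict_tie chi xi k0 _ xi_in Hk0 Hk0i Htie Hpos) as Hnb0.
  assert (Hv0 : 0 <= excess xi k0 v).
  { unfold v. rewrite excess_convex.
    pose proof (Hnb k0 Hnb0). pose proof (Hinside k0 Hk0 Hk0i). nra. }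
  (* Along the ray the excess of [k0] is affine in [t]: positive at [0],
     nonnegative at [1], so it cannot vanish in between. *)
  rewrite excess_pscale in Htie. unfold excess in Hv0.
  pose proof (sqdist_pos xi k0 Hk0i). nra.
Qed.

End NeighborHalfplanes.

Lemma dpcir_neighbor chi xi x :
  dpcir chi xi x -> forall k, neighbor chi xi k -> 0 <= dot (psub x xi) (psub xi k).
Proof.
  intros H k Hk. specialize (H k Hk). revert H.
  unfold norm. rewrite pow2_sqrt by apply dot_self_nonneg.
  unfold dot, psub, padd; simpl. lra.
Qed.

Lemma nonneg_of_affine_nonneg a b : (forall T, 0 <= T -> 0 <= a + T * b) -> 0 <= b.
Proof.
  intro H. apply Rnot_lt_le. intro Hb.
  assert (Ha : 0 <= a) by (specialize (H 0 (Rle_refl 0)); lra).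
  specialize (H ((a + 1) / - b)).
  replace (a + (a + 1) / - b * b) with (-1) in H by (field; lra).
  enough (0 <= (a + 1) / - b) by (specialize (H H0); lra).
  apply Rlt_le, Rdiv_lt_0_compat; lra.
Qed.

Lemma dpcir_cone chi xi x :
  In xi chi -> dpcir chi xi x ->
  forall l, In l chi -> 0 <= dot (psub x xi) (psub xi l).
Proof.
  intros Hi Hx l Hl.
  enough (0 <= 2 * dot (psub x xi) (psub xi l)) by lra.
  apply (nonneg_of_affine_nonneg (sqdist xi l)). intros T HT.
  rewrite <- excess_pscale. apply (excess_nonneg_of_neighbors chi xi Hi); [|exact Hl].
  intros k Hk. rewrite excess_pscale.
  pose proof (dpcir_neighbor chi xi x Hx k Hk). pose proof (sqdist_nonneg xi k).
  nra.
Qed.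

Theorem mainTheorem5 :
  forall (chi : list pt), constellation chi ->
  forall xi : pt, In xi chi ->
  forall x : pt, dpcir chi xi x ->
    (* (i) D_{i,DP} subset of D_{i,ML} *)
    (forall z : pt, dpcir chi xi z -> voronoi chi xi z) /\
    (* (ii) *)
    (forall (xj y : pt), In xj chi -> dpcir chi xj y ->
        pdist x y >= pdist xi xj) /\
    (* (iii) *)
    (forall xj : pt, In xj chi ->
        pdist x xj >= pdist xi xj /\
        (xj <> xi -> pdist x xj = pdist xi xj -> x = xi)).
Proof.
  intros chi _ xi Hi x Hx. split; [|split].
  - intros z Hz l Hl. apply pdist_le_of_sqdist. rewrite (sqdist_expand z xi l).
    pose proof (dpcir_cone chi xi z Hi Hz l Hl). pose proof (sqdist_nonneg xi l). lra.
  - intros xj y Hj Hy.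
    pose proof (dpcir_cone chi xi x Hi Hx xj Hj).
    pose proof (dpcir_cone chi xj y Hj Hy xi Hi).
    assert (E : dot (psub x y) (psub xi xj)
                = dot (psub x xi) (psub xi xj) + sqdist xi xj + dot (psub y xj) (psub xj xi))
      by (unfold sqdist, dot, psub; simpl; ring).
    apply Rle_ge, pdist_le_of_sqdist, Rge_le, dot_ge_sqnorm_sqnorm_ge. fold (sqdist xi xj). lra.
  - intros xj Hj.
    pose proof (dpcir_cone chi xi x Hi Hx xj Hj).
    pose proof (sqdist_expand x xi xj). pose proof (sqdist_nonneg x xi).
    split.
    + apply Rle_ge, pdist_le_of_sqdist. lra.
    + intros _ E. apply sqdist_eq_of_pdist in E. apply sqdist_eq0. lra.
Qed.
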